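(* Let $P$ be a poset and $\Delta^\varphi$ a nondegenerate simplex of $N(P)$. The space of filtered maps $\mathcal C^0_P(\|\Delta^\varphi\|_P,\|\Delta^\varphi\|_P)$ is contractible.
   Context: $\varphi_P:\|N(P)\|\to P$ sends a point $(\{q_0<\dots<q_m\},t)$, $t$ in the interior of $\Delta^m$, to $q_m$. For $\varphi:\Delta^n\hookrightarrow N(P)$, $\|\Delta^\varphi\|_P=(\|\Delta^n\|,\varphi_P\circ\|\varphi\|)$, a space over $P$ ($P$ with the Alexandrov topology). $\mathcal C^0_P(A,B)$ is the set of continuous maps $A\to B$ commuting with the maps to $P$, with the subspace topology of $\mathcal C^0(A,B)$ (in $\Delta$-generated spaces). *)

From HB Require Import structures.
From mathcomp Require Import all_boot all_order all_algebra.
From mathcomp Require Import all_classical all_reals all_analysis.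
Set Implicit Arguments. Unset Strict Implicit. Unset Printing Implicit Defensive.
Import Order.TTheory GRing.Theory Num.Theory.
Import numFieldTopology.Exports.
Local Open Scope classical_set_scope.
Local Open Scope ring_scope.

(* Geometric realization |Delta^n| of the standard n-simplex, as a subset of
   R^(n+1) (row vectors, with the usual (max-norm) topology). *)
Definition simplex (R : realType) (n : nat) : set 'rV[R]_n.+1 :=
  [set t | (forall i, 0 <= t ord0 i) /\ \sum_(i < n.+1) t ord0 i = 1].
Arguments simplex R n : clear implicits.

(* For a point t of |Delta^n|, the last vertex of the (unique) open face
   containing t: the largest index i with t_i > 0. *)
Definition lastv (R : realType) (n : nat) (t : 'rV[R]_n.+1) : 'I_n.+1 :=
  inord (\max_(i < n.+1 | 0 < t ord0 i) (i : nat)).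

(* A nondegenerate n-simplex phi : Delta^n -> N(P) is a strict chain
   q_0 < q_1 < ... < q_n in P. *)
Definition strict_chain d (P : porderType d) (n : nat) (q : 'I_n.+1 -> P) :=
  forall i j : 'I_n.+1, (i < j)%N -> (q i < q j)%O.

(* The structure map phi_P o ||phi|| : ||Delta^n|| -> P of ||Delta^phi||_P:
   a point in the interior of the face {i_0 < ... < i_m} goes to q_{i_m}. *)
Definition strat (R : realType) d (P : porderType d) (n : nat)
  (q : 'I_n.+1 -> P) (t : 'rV[R]_n.+1) : P := q (lastv t).

(* Elements of C^0_P(||Delta^phi||_P, ||Delta^phi||_P): maps of |Delta^n|
   into itself (represented by functions on R^(n+1), only their restriction
   to |Delta^n| matters) which are continuous and commute with the maps to P. *)
Definition filtered_map (R : realType) d (P : porderType d) (n : nat)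
  (q : 'I_n.+1 -> P) (f : 'rV[R]_n.+1 -> 'rV[R]_n.+1) : Prop :=
  [/\ {within simplex R n, continuous f},
      (forall t, simplex R n t -> simplex R n (f t)) &
      (forall t, simplex R n t -> strat q (f t) = strat q (t : 'rV[R]_n.+1))].

Definition eq_on_simplex (R : realType) (n : nat)
  (f g : 'rV[R]_n.+1 -> 'rV[R]_n.+1) : Prop :=
  forall t, simplex R n t -> f t = g t.

(* Contractibility of the space C^0_P(||Delta^phi||_P, ||Delta^phi||_P) in
   Delta-generated spaces: a homotopy H : C x [0,1] -> C from the identity to
   a constant map c, which is continuous for the Delta-generated topology of
   the product.  A map out of the Delta-ification of C x [0,1] is continuous
   iff its composite with every continuous singular simplex
   Delta^k -> C x [0,1] is continuous; by the exponential law (|Delta^n| is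
   compact Hausdorff), a map sigma : |Delta^k| -> C (compact-open topology)
   is continuous iff its adjoint |Delta^k| x |Delta^n| -> |Delta^n| is. *)
Definition filtered_maps_contractible (R : realType) d (P : porderType d)
  (n : nat) (q : 'I_n.+1 -> P) : Prop :=
  exists (H : ('rV[R]_n.+1 -> 'rV[R]_n.+1) -> R -> ('rV[R]_n.+1 -> 'rV[R]_n.+1))
         (c : 'rV[R]_n.+1 -> 'rV[R]_n.+1),
  filtered_map q c /\
  [/\ (* H is a well-defined map C x [0,1] -> C *)
      (forall f s, filtered_map q f -> 0 <= s <= 1 -> filtered_map q (H f s)),
      (forall f g s, filtered_map q f -> filtered_map q g -> 0 <= s <= 1 ->
         eq_on_simplex f g -> eq_on_simplex (H f s) (H g s)),
      (forall f, filtered_map q f -> eq_on_simplex (H f 0) f),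
      (forall f, filtered_map q f -> eq_on_simplex (H f 1) c) &
      (forall (k : nat) (sigma : 'rV[R]_k.+1 -> 'rV[R]_n.+1 -> 'rV[R]_n.+1)
              (tau : 'rV[R]_k.+1 -> R),
         (forall u, simplex R k u -> filtered_map q (sigma u)) ->
         (forall u, simplex R k u -> 0 <= tau u <= 1) ->
         {within simplex R k, continuous tau} ->
         {within simplex R k `*` simplex R n,
            continuous (fun ux : 'rV[R]_k.+1 * 'rV[R]_n.+1 => sigma ux.1 ux.2)} ->
         {within simplex R k `*` simplex R n,
            continuous (fun ux : 'rV[R]_k.+1 * 'rV[R]_n.+1 =>
                          H (sigma ux.1) (tau ux.1) ux.2)})].

(* The straight-line homotopy H(f, s) = (1 - s) f + s id contracts the space
   of filtered self-maps of |Delta^n| onto the identity.  It stays inside the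
   simplex by convexity.  It stays filtered because the stratum of a point t is
   q applied to the last vertex of the support of t: since q is injective on a
   strict chain, a filtered f satisfies lastv (f t) = lastv t, and a convex
   combination of two points of the simplex with the same last vertex keeps
   that vertex in its support and gains none beyond it.  Joint continuity in
   the parameters is that of scalar multiplication and addition. *)
From HB Require Import structures.
From mathcomp Require Import all_boot all_order all_algebra.
From mathcomp Require Import all_classical all_reals all_analysis.
From mathcomp Require Import lra.
Set Implicit Arguments. Unset Strict Implicit. Unset Printing Implicit Defensive.
Import Order.TTheory GRing.Theory Num.Theory.
Import numFieldTopology.Exports.
Local Open Scope classical_set_scope.
Local Open Scope ring_scope.

Lemma within_continuous_comp_maps (T S U : topologicalType) (A : set T) (B : set S)
    (g : T -> S) (h : S -> U) :
  continuous g -> (forall x, A x -> B (g x)) -> {within B, continuous h} ->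
  {within A, continuous (h \o g)}.
Proof.
move=> cg gAB /subspace_continuousP ch; apply/subspace_continuousP => x Ax.
apply: cvg_trans (ch _ (gAB _ Ax)) => V /= BV.
have := cg x _ BV; rewrite nbhs_simpl /=.
by apply: filterS => z BVz Az; exact: BVz (gAB _ Az).
Qed.

Lemma within_continuous_convex_comb (R : realType) (T : topologicalType)
    (V : normedModType R) (A : set T) (a : T -> R) (f g : T -> V) :
  {within A, continuous a} -> {within A, continuous f} ->
  {within A, continuous g} ->
  {within A, continuous (fun x => (1 - a x) *: f x + a x *: g x)}.
Proof.
move=> ca cf cg x; apply: cvgD; apply: cvgZ; [|exact: cf| exact: ca|exact: cg].
by apply: cvgB; [exact: cvg_cst|exact: ca].
Qed.

Lemma strict_chain_inj d (P : porderType d) n (q : 'I_n.+1 -> P) :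
  strict_chain q -> injective q.
Proof.
move=> hq i j qij; case: (ltngtP i j) => [ij|ji|/val_inj//].
- by have := hq _ _ ij; rewrite qij ltxx.
- by have := hq _ _ ji; rewrite qij ltxx.
Qed.

Section LastVertex.
Variables (R : realType) (n : nat).
Implicit Types (u w : 'rV[R]_n.+1) (s : R).

Lemma val_lastv w : lastv w = \max_(i < n.+1 | 0 < w ord0 i) i :> nat.
Proof.
by rewrite /lastv inordK // ltnS; apply/bigmax_leqP => i _; exact: leq_ord.
Qed.

Lemma lastv_max w i : 0 < w ord0 i -> (i <= lastv w)%N.
Proof. by move=> wi; rewrite val_lastv; exact: leq_bigmax_cond. Qed.

Lemma lastvE w m : 0 < w ord0 m ->
  (forall i, 0 < w ord0 i -> (i <= m)%N) -> lastv w = m.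
Proof.
move=> wm wle; apply/val_inj/eqP => /=; rewrite eqn_leq lastv_max // andbT.
by rewrite val_lastv; exact/bigmax_leqP.
Qed.

Lemma lastv_gt0 w : simplex R n w -> 0 < w ord0 (lastv w).
Proof.
move=> [w_ge0 w_sum1].
have [i wi_gt0] : exists i, 0 < w ord0 i.
  apply/not_existsP => w_le0.
  suff : \sum_(i < n.+1) w ord0 i <= 0 by rewrite w_sum1 ler10.
  by apply: sumr_le0 => i _; rewrite leNgt; apply/negP; exact: w_le0.
have [|j wj_gt0 wj_max] := @eq_bigmax_cond _ (fun j => 0 < w ord0 j) val.
  by apply/card_gt0P; exists i.
by have -> : lastv w = j by apply: val_inj => /=; rewrite val_lastv.
Qed.

Lemma simplex_convex u w s : simplex R n u -> simplex R n w -> 0 <= s <= 1 ->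
  simplex R n ((1 - s) *: u + s *: w).
Proof.
move=> [u_ge0 u_sum1] [w_ge0 w_sum1] /andP[s_ge0 s_le1]; split.
  by move=> i; rewrite !mxE addr_ge0 // mulr_ge0 // subr_ge0.
under eq_bigr do rewrite !mxE.
by rewrite big_split /= -!mulr_sumr u_sum1 w_sum1 !mulr1 subrK.
Qed.

Lemma lastv_convex u w s : simplex R n u -> simplex R n w -> 0 <= s <= 1 ->
  lastv u = lastv w -> lastv ((1 - s) *: u + s *: w) = lastv w.
Proof.
move=> uS wS /andP[s_ge0 s_le1] uw; have [u_ge0 _] := uS; have [w_ge0 _] := wS.
apply: lastvE => [|i]; rewrite !mxE.
  have := lastv_gt0 uS; have := lastv_gt0 wS; rewrite uw; nra.
have [ui_gt0 _|ui_le0] := ltrP 0 (u ord0 i); first by rewrite -uw lastv_max.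
have [wi_gt0 _|wi_le0] := ltrP 0 (w ord0 i); first exact: lastv_max.
by have := u_ge0 i; have := w_ge0 i; nra.
Qed.

End LastVertex.

Definition straight_homotopy {R : realType} {n : nat}
    (f : 'rV[R]_n.+1 -> 'rV[R]_n.+1) (s : R) (t : 'rV[R]_n.+1) :=
  (1 - s) *: f t + s *: t.

Lemma straight_homotopy_continuous (R : realType) (n : nat)
    (T : topologicalType) (A : set T)
    (sigma : T -> 'rV[R]_n.+1 -> 'rV[R]_n.+1) (tau : T -> R) :
  {within A, continuous tau} ->
  {within A `*` simplex R n, continuous (fun ux => sigma ux.1 ux.2)} ->
  {within A `*` simplex R n,
    continuous (fun ux => straight_homotopy (sigma ux.1) (tau ux.1) ux.2)}.
Proof.
move=> ctau csigma; apply: within_continuous_convex_comb => //.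
- apply: (within_continuous_comp_maps (g := fst) (h := tau)) ctau => [x|ux []//].
  exact: cvg_fst.
- by apply: continuous_subspaceT => x; exact: cvg_snd.
Qed.

Section FilteredMaps.
Variables (R : realType) (d : Order.disp_t) (P : porderType d) (n : nat).
Variable q : 'I_n.+1 -> P.

Lemma filtered_map_id : filtered_map q (@id 'rV[R]_n.+1).
Proof. by split=> //; apply: continuous_subspaceT => x; exact: cvg_id. Qed.

Lemma filtered_map_straight_homotopy (f : 'rV[R]_n.+1 -> 'rV[R]_n.+1) s :
  strict_chain q -> filtered_map q f -> 0 <= s <= 1 ->
  filtered_map q (straight_homotopy f s).
Proof.
move=> hq [cf fS f_strat] s01; have [cid _ _] := filtered_map_id; split.
- apply: (within_continuous_convex_comb (a := fun=> s)) => //.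
  by apply: continuous_subspaceT; exact: cst_continuous.
- by move=> t tS; apply: simplex_convex => //; exact: fS.
- move=> t tS; rewrite /strat /straight_homotopy lastv_convex //; first exact: fS.
  exact: strict_chain_inj hq _ _ (f_strat t tS).
Qed.

End FilteredMaps.

Theorem lemma2p18 (R : realType) (d : Order.disp_t) (P : porderType d)
  (n : nat) (q : 'I_n.+1 -> P) (hq : strict_chain q) :
  filtered_maps_contractible R q.
Proof.
exists (@straight_homotopy R n), id; split; first exact: filtered_map_id.
split.
- by move=> f s fq s01; exact: filtered_map_straight_homotopy.
- by move=> f g s _ _ _ fg t tS; rewrite /straight_homotopy fg.
- by move=> f _ t _; rewrite /straight_homotopy subr0 scale1r scale0r addr0.
- by move=> f _ t _; rewrite /straight_homotopy subrr scale0r add0r scale1r.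
- by move=> k sigma tau _ _ ctau csigma; exact: straight_homotopy_continuous.
Qed.
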